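(* Let $G$ be a graph and let $p\geq 2$ be an integer. Then $\mathrm{id}^{\leq p}(G) \leq \left\lceil\frac{|E(G)|}{\lfloor p/2\rfloor}\right\rceil + \frac{1}{2}p^2$.
   Context: All graphs are finite and simple. For an oriented graph $D$ and a set $X\subseteq V(D)$, the inversion of $X$ reverses the orientation of every arc with both endvertices in $X$. For an integer $p\ge 2$, a $(\leq p)$-inversion is the inversion of a set of at most $p$ vertices. For a graph $G$, $\mathrm{id}^{\leq p}(G)$ (the $(\leq p)$-inversion diameter) is the maximum, over all ordered pairs $(\vec G_1,\vec G_2)$ of orientations of $G$ (on the same labelled vertex set), of the minimum number of $(\leq p)$-inversions whose successive application transforms $\vec G_1$ into $\vec G_2$; equivalently it is the diameter of the graph whose vertices are the orientations of $G$, two being adjacent iff one $(\leq p)$-inversion transforms one into the other. *)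

From mathcomp Require Import all_boot all_order.
Set Implicit Arguments. Unset Strict Implicit. Unset Printing Implicit Defensive.

Definition simple_graph (T : finType) (e : rel T) : Prop :=
  symmetric e /\ irreflexive e.

Definition edges (T : finType) (e : rel T) : {set {set T}} :=
  [set [set x.1; x.2] | x in [set x : T * T | e x.1 x.2]].

(* An orientation of G: a relation [o] (o u v means the arc u -> v) such that
   every arc is an edge of G and each edge uv receives exactly one direction. *)
Definition orientation (T : finType) (e : rel T) (o : rel T) : Prop :=
  (forall u v, o u v -> e u v) /\ (forall u v, e u v -> o u v != o v u).

Definition invert (T : finType) (X : {set T}) (o : rel T) : rel T :=
  fun u v => if (u \in X) && (v \in X) then o v u else o u v.

Definition apply_inversions (T : finType) (s : seq {set T}) (o : rel T) : rel T :=
  foldl (fun o' X => invert X o') o s.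

Definition le_p_inversion_seq (T : finType) (p : nat) (s : seq {set T})
    (o1 o2 : rel T) : Prop :=
  all (fun X : {set T} => #|X| <= p) s /\
  (forall u v, apply_inversions s o1 u v = o2 u v).

(* ceiling of a / b for b >= 1 *)
Definition ceildiv (a b : nat) : nat := (a + b - 1) %/ b.

From mathcomp Require Import all_boot all_order zify.
Set Implicit Arguments. Unset Strict Implicit. Unset Printing Implicit Defensive.

(* An arc uv is reversed by a sequence of inversions iff {u, v} lies in an odd
   number of the inverted sets, so it suffices to hit every edge on which the
   two orientations differ an odd number of times and every other edge an even
   number of times.  Let k = p/2.  While some vertex v has degree d >= k, invert
   v together with at most p - 1 of its neighbours at a time, which fixes all
   edges at v with at most ceil(d/(p-1)) <= d/k inversions (edges among those
   neighbours are absorbed into the remaining parity targets); then delete v.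
   Once all degrees are below k, an edge meets or is joined by an edge to at
   most 2k(k-1) other edges.  Take a maximal induced matching M of the edges
   still to be reversed and invert the unions of k of its edges at a time
   (2k <= p vertices each), which reverses exactly M at a cost of less than
   |M|/k + 1 inversions.  Every remaining edge conflicted with some edge of M,
   so 2k(k-1) + 1 such rounds finish the job. *)

Lemma ceildiv_bound m k z r : 0 < k -> k * z <= m + k * r -> z <= ceildiv m k + r.
Proof.
move=> k_gt0 le_kz.
suff : z - r <= ceildiv m k by lia.
rewrite /ceildiv leq_divRL //; nia.
Qed.

Lemma ceildiv_pred_mul_le k p w d : 0 < k -> 2 * k <= p -> w <= d -> k <= d ->
  k * ceildiv w p.-1 <= d.
Proof.
move=> k_gt0 kp wd kd; rewrite /ceildiv.
have := leq_divM (w + p.-1 - 1) p.-1.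
case: (_ %/ _) => [|[|c]] le_c; try lia.
move: le_c; have -> : p = k + (p - k) by lia.
set m := p - k; have : k <= m by lia.
nia.
Qed.

Lemma exists_subset_card (U : finType) (A : {set U}) n :
  n <= #|A| -> exists2 S : {set U}, S \subset A & #|S| = n.
Proof.
case/card_geqP=> s [s_uniq s_size sA]; exists [set x in s].
  by apply/subsetP=> x; rewrite inE => /sA.
by rewrite cardsE (card_uniqP s_uniq).
Qed.

Lemma exists_in_set2 (T : finType) (d : rel T) u v : irreflexive d -> symmetric d ->
  [exists x in [set u; v], exists y in [set u; v], d x y] = d u v.
Proof.
move=> d_irr d_sym; apply/exists_inP/idP => [[x /set2P[]-> /exists_inP[y /set2P[]->]]|duv].
- by rewrite d_irr.
- by [].
- by rewrite d_sym.
- by rewrite d_irr.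
by exists u; rewrite ?set21 //; apply/exists_inP; exists v; rewrite ?set22.
Qed.

Lemma leq_card_bigcup (I U : finType) (P : {pred I}) (F : I -> {set U}) :
  #|\bigcup_(i in P) F i| <= \sum_(i in P) #|F i|.
Proof.
apply: (big_ind2 (fun (X : {set U}) n => #|X| <= n)) => [|X1 n1 X2 n2 le1 le2|//].
  by rewrite cards0.
exact: leq_trans (leq_card_setU _ _) (leq_add le1 le2).
Qed.

Lemma exists_blocks (U : finType) (q : nat) (A : {set U}) : 0 < q ->
  exists ss : seq {set U},
    [/\ {in ss, forall S : {set U}, S \subset A /\ #|S| <= q},
        forall x, count (fun S : {set U} => x \in S) ss = (x \in A)
      & size ss <= ceildiv #|A| q].
Proof.
move=> q_gt0; rewrite /ceildiv.
have [n ltAn] := ubnP #|A|; elim: n A ltAn => // n IH A ltAn.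
have [->|A_n0] := eqVneq A set0.
  by exists [::]; split=> // x; rewrite inE.
have [S SA cardS] := exists_subset_card (geq_minr q #|A|).
have A_gt0 : 0 < #|A| by rewrite card_gt0.
have cardAS : #|A :\: S| = #|A| - minn q #|A| by rewrite cardsDS // cardS.
have [|ss [ss_sub ss_count ss_size]] := IH (A :\: S); first by rewrite cardAS; lia.
exists (S :: ss); split.
- move=> X; rewrite inE => /predU1P[->|/ss_sub[XA Xq]].
    by rewrite SA cardS geq_minl.
  by rewrite (subset_trans XA (subsetDl _ _)).
- move=> x /=; rewrite ss_count inE.
  by case: (boolP (x \in S)) => [/(subsetP SA)->|].
- move: ss_size; rewrite cardAS !leq_divRL //=.
  rewrite mulSn; case: (leqP q #|A|) => [qA|Aq]; first lia.
  by rewrite subnn add0n; case: (size ss) => [|c] /=; lia.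
Qed.

Definition ncover (T : finType) (s : seq {set T}) (g : {set T}) :=
  count (fun X : {set T} => g \subset X) s.

Lemma apply_inversions_pair (T : finType) (s : seq {set T}) (o : rel T) u v :
  apply_inversions s o u v = if odd (ncover s [set u; v]) then o v u else o u v.
Proof.
elim: s o => [|X s IH] o //=.
rewrite IH /invert /ncover /= subUset !sub1set oddD.
by case: (odd _); case: (u \in X); case: (v \in X).
Qed.

Section InducedSubgraph.
Variables (T : finType) (e : rel T).
Hypotheses (e_sym : symmetric e) (e_irr : irreflexive e).

Lemma edgesP g : reflect (exists u v, e u v /\ g = [set u; v]) (g \in edges e).
Proof.
apply: (iffP imsetP) => [[x]|[u [v [euv ->]]]]; last by exists (u, v); rewrite ?inE.
by rewrite inE => exx ->; exists x.1, x.2.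
Qed.

Lemma card_edge g : g \in edges e -> #|g| = 2.
Proof.
case/edgesP=> u [v [euv ->]]; rewrite cards2.
by case: eqP euv => // ->; rewrite e_irr.
Qed.

Definition induced_edges (V : {set T}) := [set g in edges e | g \subset V].
Definition induced_nbhd (V : {set T}) v := [set u in V | e v u].
Definition induced_deg (V : {set T}) v := #|[set g in induced_edges V | v \in g]|.

Lemma induced_edgesT : induced_edges [set: T] = edges e.
Proof. by apply/setP=> g; rewrite inE subsetT andbT. Qed.

Lemma induced_edge_at (V : {set T}) v g : g \in induced_edges V -> v \in g ->
  exists2 u, u \in induced_nbhd V v & g = [set v; u].
Proof.
rewrite inE => /andP[/edgesP[a [b [eab ->]]] abV].
have [aV bV] : a \in V /\ b \in V by rewrite !(subsetP abV) ?inE ?eqxx ?orbT.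
rewrite !inE => /orP[]/eqP->; first by exists b; rewrite // inE bV.
by exists a; rewrite 1?setUC // inE aV e_sym.
Qed.

Lemma card_induced_nbhd (V : {set T}) v : v \in V -> #|induced_nbhd V v| <= induced_deg V v.
Proof.
move=> vV; rewrite -(@card_in_imset _ _ (fun u => [set v; u])); last first.
  move=> u1 u2; rewrite !inE => /andP[_ e1] _ E.
  have : u1 \in [set v; u2] by rewrite -E !inE eqxx orbT.
  by rewrite !inE => /orP[/eqP E1|/eqP //]; move: e1; rewrite E1 e_irr.
apply/subset_leq_card/subsetP => g /imsetP[u]; rewrite !inE => /andP[uV evu] ->.
rewrite !inE eqxx subUset !sub1set vV uV !andbT.
by apply/edgesP; exists v, u.
Qed.

Lemma card_induced_edgesD1 (V : {set T}) v :
  #|induced_edges V| = #|induced_edges (V :\ v)| + induced_deg V v.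
Proof.
rewrite -(cardsID [set g : {set T} | v \in g] (induced_edges V)) addnC.
congr (_ + _); apply: eq_card => g; rewrite !inE // subsetD1.
by case: (v \in g); rewrite ?andbF ?andbT.
Qed.

Definition conflict (f h : {set T}) :=
  [exists x in f, exists y in h, (x == y) || e x y].

Definition induced_matching (M : {set {set T}}) :=
  [forall f in M, forall h in M, (f != h) ==> ~~ conflict f h].

Definition conflicts (F : {set {set T}}) f := [set h in F | (h != f) && conflict f h].

Definition target_edges (V : {set T}) (D : pred {set T}) := [set g in induced_edges V | D g].

Lemma conflictC f h : conflict f h = conflict h f.
Proof.
apply/idP/idP => /exists_inP[x xf /exists_inP[y yh xy]];
  apply/exists_inP; exists y => //; apply/exists_inP; exists x => //;
  by rewrite eq_sym e_sym.
Qed.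

Lemma induced_matchingP (M : {set {set T}}) :
  reflect {in M &, forall f h, f != h -> ~~ conflict f h} (induced_matching M).
Proof.
apply: (iffP forall_inP) => [cM f h fM hM|cM f fM].
  exact/implyP/(forall_inP (cM f fM)).
by apply/forall_inP=> h hM; apply/implyP; apply: cM.
Qed.

Lemma subset_cover_matching (M S : {set {set T}}) g : M \subset edges e -> induced_matching M ->
  S \subset M -> g \in edges e -> (g \subset cover S) = (g \in S).
Proof.
move=> ME /induced_matchingP cM SM gE; apply/idP/idP => [|gS]; last exact: bigcup_sup.
case/edgesP: (gE) => a [b [eab gab]].
rewrite {1}gab subUset !sub1set => /andP[/bigcupP[h hS ah] /bigcupP[h' h'S bh']].
have hh' : h = h'.
  apply/eqP; apply: contraT => neq.
  have /negP[] := cM h h' (subsetP SM _ hS) (subsetP SM _ h'S) neq.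
  by apply/exists_inP; exists a => //; apply/exists_inP; exists b; rewrite ?eab ?orbT.
subst h'; suff -> : g = h by [].
apply/eqP; rewrite eqEcard gab subUset !sub1set ah bh' -gab (card_edge gE).
by rewrite (card_edge (subsetP ME _ (subsetP SM _ hS))).
Qed.

Lemma maxset_matching_conflict (F M : {set {set T}}) f :
  maxset (fun M => (M \subset F) && induced_matching M) M -> f \in F -> f \notin M ->
  exists2 h, h \in M & conflict f h.
Proof.
move=> maxM fF fM; have /andP[MF /induced_matchingP cM] := maxsetp maxM.
apply/exists_inP; apply: contraNT fM => /exists_inPn nc.
suff <- : f |: M = M by rewrite setU11.
apply: (maxsetsup maxM) (subsetUr _ _); rewrite subUset sub1set fF MF.
apply/induced_matchingP=> a b; rewrite !inE.
case/predU1P=> [->|aM] /predU1P[->|bM]; rewrite ?eqxx // => ab.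
- exact: nc.
- by rewrite conflictC nc.
- exact: cM.
Qed.

Lemma card_conflicts_low_degree (V : {set T}) (F : {set {set T}}) f k :
  (forall v, v \in V -> induced_deg V v < k) ->
  F \subset induced_edges V -> f \in induced_edges V -> #|conflicts F f| <= 2 * k * (k - 1).
Proof.
move=> deg_lt FV; rewrite inE => /andP[fE fV].
pose Z := \bigcup_(x in f) (x |: induced_nbhd V x).
have ZV : Z \subset V.
  apply/bigcupsP=> x xf; rewrite subUset sub1set (subsetP fV _ xf).
  by apply/subsetP=> y; rewrite inE => /andP[].
have cardZ : #|Z| <= 2 * k.
  apply: leq_trans (leq_card_bigcup _ _) _; rewrite -(card_edge fE) -sum_nat_const.
  apply: leq_sum => x xf; have xV := subsetP fV _ xf; rewrite cardsU1.
  by have := card_induced_nbhd xV; have := deg_lt x xV; case: (x \in _) => /=; lia.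
have conflicts_sub :
    conflicts F f \subset \bigcup_(y in Z) [set g in induced_edges V | y \in g].
  apply/subsetP=> h; rewrite inE => /andP[hF /andP[_ /exists_inP[x xf]]].
  case/exists_inP=> y yh xy; have hV := subsetP FV _ hF.
  have yV : y \in V by move: hV; rewrite inE => /andP[_ /subsetP->].
  apply/bigcupP; exists y; last by rewrite inE hV.
  by apply/bigcupP; exists x; rewrite // !inE yV eq_sym.
apply: leq_trans (subset_leq_card conflicts_sub) (leq_trans (leq_card_bigcup _ _) _).
apply: (@leq_trans (\sum_(y in Z) (k - 1))).
  by apply: leq_sum => y /(subsetP ZV)/deg_lt; rewrite /induced_deg; lia.
by rewrite sum_nat_const leq_mul.
Qed.

Variable p : nat.

Definition le_p_inversions (V : {set T}) (s : seq {set T}) :=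
  all (fun X : {set T} => (X \subset V) && (#|X| <= p)) s.

Definition realizes (V : {set T}) (D : pred {set T}) (s : seq {set T}) :=
  le_p_inversions V s /\ {in induced_edges V, forall g, odd (ncover s g) = D g}.

Lemma realizes_cat (V : {set T}) D s1 s2 : le_p_inversions V s1 ->
  realizes V (fun g => D g (+) odd (ncover s1 g)) s2 -> realizes V D (s1 ++ s2).
Proof.
move=> s1_le [s2_le s2_odd]; split.
  by move: s1_le s2_le; rewrite /le_p_inversions all_cat => -> ->.
move=> g gV; rewrite /ncover count_cat oddD -/(ncover s1 g) -/(ncover s2 g) s2_odd //.
by rewrite addbC -addbA addbb addbF.
Qed.

Lemma realizes_setD1 (V : {set T}) v D s : realizes (V :\ v) D s ->
  {in induced_edges V, forall g : {set T}, v \in g -> D g = false} -> realizes V D s.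
Proof.
move=> [s_le s_odd] Dv; split.
  by apply: sub_all s_le => X /andP[XV ->]; rewrite (subset_trans XV) ?subsetDl.
move=> g gV; case: (boolP (v \in g)) => vg; last first.
  by apply: s_odd; move: gV; rewrite !inE subsetD1 vg => /andP[-> ->].
rewrite Dv // /ncover (eq_in_count (a2 := pred0)) ?count_pred0 // => X /(allP s_le).
by case/andP=> XV _ /=; apply/negP=> /subsetP/(_ v vg)/(subsetP XV); rewrite !inE eqxx.
Qed.

Lemma star_inversions (V W : {set T}) v : 1 < p -> v \in V ->
  W \subset induced_nbhd V v ->
  exists s, [/\ le_p_inversions V s,
    forall u, u != v -> ncover s [set v; u] = (u \in W)
    & size s <= ceildiv #|W| p.-1].
Proof.
move=> p_gt1 vV WN; have [|ss [ss_sub ss_count ss_size]] := exists_blocks W (q := p.-1).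
  by rewrite -ltnS prednK ?(ltnW p_gt1).
have WV : W \subset V.
  by apply: subset_trans WN _; apply/subsetP=> u; rewrite inE => /andP[].
exists [seq v |: B | B <- ss]; split; rewrite ?size_map //.
  apply/allP=> _ /mapP[B /ss_sub[BW cardB] ->].
  rewrite subUset sub1set vV (subset_trans BW WV) cardsU1.
  by case: (v \in B) => /=; lia.
move=> u uv; rewrite /ncover count_map -ss_count; apply: eq_count => B /=.
by rewrite subUset !sub1set setU11 !inE (negbTE uv).
Qed.

Lemma matching_inversions (V : {set T}) (M : {set {set T}}) k :
  0 < k -> 2 * k <= p -> M \subset induced_edges V -> induced_matching M ->
  exists s, [/\ le_p_inversions V s,
    {in edges e, forall g, ncover s g = (g \in M)} & size s <= ceildiv #|M| k].
Proof.
move=> k_gt0 kp MV cM; have [ss [ss_sub ss_count ss_size]] := exists_blocks M k_gt0.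
have ME : M \subset edges e.
  by apply: subset_trans MV _; apply/subsetP=> g; rewrite inE => /andP[].
exists [seq cover B | B <- ss]; split; rewrite ?size_map //.
  apply/allP=> _ /mapP[B /ss_sub[BM cardB] ->]; apply/andP; split.
    by apply/bigcupsP=> g /(subsetP BM)/(subsetP MV); rewrite inE => /andP[].
  apply: leq_trans (leq_card_cover B) _.
  rewrite (eq_bigr (fun=> 2)) => [|h /(subsetP BM)/(subsetP ME)/card_edge //].
  by rewrite sum_nat_const; lia.
move=> g gE; rewrite /ncover count_map -ss_count; apply: eq_in_count => B /ss_sub[BM _] /=.

exact: (subset_cover_matching ME cM BM gE).
Qed.

Lemma realizes_by_matchings (V : {set T}) k r D : 0 < k -> 2 * k <= p ->
  {in target_edges V D, forall f, #|conflicts (target_edges V D) f| < r} ->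
  exists s, realizes V D s /\ k * size s <= #|target_edges V D| + k * r.
Proof.
move=> k_gt0 kp; elim: r D => [|r IH] D conflicts_lt.
  exists [::]; split; last by rewrite muln0.
  split=> // g gV; apply/esym/negP => Dg.
  by have := conflicts_lt g; rewrite inE gV Dg => /(_ isT).
set F := target_edges V D.
have FV : F \subset induced_edges V by apply/subsetP=> g; rewrite inE => /andP[].
pose P (M : {set {set T}}) := (M \subset F) && induced_matching M.
have [|M maxM _] := @maxset_exists _ P set0.
  by rewrite /P sub0set; apply/induced_matchingP=> f; rewrite inE.
have /andP[MF cM] := maxsetp maxM.
have [s1 [s1_le s1_cover s1_size]] := matching_inversions k_gt0 kp (subset_trans MF FV) cM.
pose D' g := D g (+) odd (ncover s1 g).
have DF : target_edges V D' = F :\: M.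
  apply/setP=> g; rewrite !inE /D'; case: (boolP (g \in edges e)) => gE /=; last first.
    by rewrite andbF.
  rewrite s1_cover // oddb; case: (boolP (g \in M)) => gM /=; last by rewrite addbF.
  by have := subsetP MF g gM; rewrite !inE => /andP[/andP[_ ->] ->]; rewrite addbT.
have conflicts_lt' : {in target_edges V D', forall f,
    #|conflicts (target_edges V D') f| < r}.
  move=> f; rewrite DF inE => /andP[fM fF].
  have [h hM fh] := maxset_matching_conflict maxM fF fM.
  rewrite -ltnS; apply: leq_trans (conflicts_lt f fF); apply: proper_card.
  apply/properP; split.
    by apply/subsetP=> g; rewrite !inE => /andP[/andP[_ ->] ->].
  exists h; last by rewrite !inE hM.
  rewrite inE (subsetP MF _ hM) fh andbT; apply: (contraNneq _ fM).
  by move=> <-.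
have [s2 [s2_real s2_size]] := IH D' conflicts_lt'.
exists (s1 ++ s2); split; first exact: realizes_cat.
move: s1_size s2_size; rewrite /ceildiv leq_divRL // DF cardsDS // size_cat.
by have := subset_leq_card MF; lia.
Qed.

Lemma realizes_low_degree (V : {set T}) D k : 0 < k -> 2 * k <= p ->
  (forall v, v \in V -> induced_deg V v < k) ->
  exists s, realizes V D s /\
    k * size s <= #|induced_edges V| + k * (2 * k * (k - 1)).+1.
Proof.
move=> k_gt0 kp deg_lt.
have FV : target_edges V D \subset induced_edges V.
  by apply/subsetP=> g; rewrite inE => /andP[].
have [|s [s_real s_size]] := @realizes_by_matchings V k (2 * k * (k - 1)).+1 D k_gt0 kp.
  by move=> f fF; rewrite ltnS (card_conflicts_low_degree deg_lt) // (subsetP FV).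
exists s; split=> //; apply: leq_trans s_size _.
by rewrite leq_add2r subset_leq_card.
Qed.

Lemma realizes_induced (V : {set T}) D k : 0 < k -> 2 * k <= p ->
  exists s, realizes V D s /\
    k * size s <= #|induced_edges V| + k * (2 * k * (k - 1)).+1.
Proof.
move=> k_gt0 kp; have [n ltVn] := ubnP #|V|; elim: n V ltVn D => // n IH V ltVn D.
case: (pickP [pred v in V | k <= induced_deg V v]) => [v /andP[vV deg_ge]|low]; last first.
  by apply: realizes_low_degree => // v vV; have := low v; rewrite /= vV /= ltnNge => ->.
pose W := [set u in induced_nbhd V v | D [set v; u]].
have WN : W \subset induced_nbhd V v by apply/subsetP=> u; rewrite inE => /andP[].
have [|s1 [s1_le s1_star s1_size]] := star_inversions _ vV WN; first by lia.
pose D' g := D g (+) odd (ncover s1 g).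
have [|s2 [s2_real s2_size]] := IH (V :\ v) _ D'.
  by move: ltVn; rewrite (cardsD1 v V) vV; lia.
exists (s1 ++ s2); split.
  apply: realizes_cat => //; apply: realizes_setD1 s2_real _ => g gV vg.
  have [u uN ->] := induced_edge_at gV vg.
  have uv : u != v by apply: contraTneq uN => ->; rewrite inE e_irr andbF.
  by rewrite /D' s1_star // oddb inE uN addbb.
have W_le : #|W| <= induced_deg V v.
  exact: leq_trans (subset_leq_card WN) (card_induced_nbhd vV).
have := ceildiv_pred_mul_le k_gt0 kp W_le deg_ge.
have := leq_mul (leqnn k) s1_size.
by rewrite size_cat mulnDr (card_induced_edgesD1 V v); lia.
Qed.

End InducedSubgraph.

Section Orientations.
Variables (T : finType) (e : rel T).
Hypotheses (e_sym : symmetric e) (e_irr : irreflexive e).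

Lemma orientation_nonedge o u v : orientation e o -> ~~ e u v -> o u v = false.
Proof. by move=> [o_e _] /negP neuv; apply/negP=> /o_e. Qed.

Lemma orientation_swap o u v : orientation e o -> e u v -> o v u = ~~ o u v.
Proof. by move=> [_ o_neq] /o_neq; case: (o u v); case: (o v u). Qed.

Lemma orientation_diff_sym o1 o2 : orientation e o1 -> orientation e o2 ->
  symmetric (fun u v => o1 u v != o2 u v).
Proof.
move=> o1_or o2_or u v /=; have [euv|neuv] := boolP (e u v).
  by rewrite !(orientation_swap _ euv) //; case: (o1 u v); case: (o2 u v).
have nevu : ~~ e v u by rewrite e_sym.
by rewrite !(orientation_nonedge _ neuv) ?(orientation_nonedge _ nevu).
Qed.

Lemma orientation_diff_irr o1 o2 : orientation e o1 -> orientation e o2 ->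
  irreflexive (fun u v => o1 u v != o2 u v).
Proof.
by move=> o1_or o2_or u /=; rewrite !(orientation_nonedge _ (negbT (e_irr u))).
Qed.

Lemma apply_inversions_parity o1 o2 s : orientation e o1 -> orientation e o2 ->
  (forall u v, e u v -> odd (ncover s [set u; v]) = (o1 u v != o2 u v)) ->
  forall u v, apply_inversions s o1 u v = o2 u v.
Proof.
move=> o1_or o2_or s_odd u v; rewrite apply_inversions_pair.
have [euv|neuv] := boolP (e u v).
  by rewrite s_odd // (orientation_swap o1_or euv); case: (o1 u v); case: (o2 u v).
have nevu : ~~ e v u by rewrite e_sym.
by rewrite !(orientation_nonedge _ neuv) ?(orientation_nonedge _ nevu) ?if_same.
Qed.

End Orientations.

Theorem theorem1p2 (T : finType) (e : rel T) (p : nat) :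
  simple_graph e -> 2 <= p ->
  forall o1 o2 : rel T, orientation e o1 -> orientation e o2 ->
  exists s : seq {set T},
    le_p_inversion_seq p s o1 o2 /\
    2 * size s <= 2 * ceildiv #|edges e| p./2 + p ^ 2.
Proof.
move=> [e_sym e_irr] p_ge2 o1 o2 o1_or o2_or.
have k_gt0 : 0 < p./2 by rewrite half_gt0.
have kp : 2 * p./2 <= p by rewrite mul2n -{2}(odd_double_half p) leq_addl.
pose D (g : {set T}) := [exists x in g, exists y in g, o1 x y != o2 x y].
have [s [[s_le s_odd] s_size]] := realizes_induced e_sym e_irr [set: T] D k_gt0 kp.
exists s; split; [split|].
- by apply: sub_all s_le => X /andP[].
- apply: apply_inversions_parity => // u v euv.
  rewrite s_odd ?induced_edgesT; last by apply/edgesP; exists u, v.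
  by apply: exists_in_set2; [apply: orientation_diff_irr | apply: orientation_diff_sym].
- rewrite induced_edgesT in s_size; have := ceildiv_bound k_gt0 s_size.
  move: (p./2) k_gt0 kp => k k_gt0 kp.
  have : 2 * (2 * k * (k - 1)).+1 <= p ^ 2 by nia.
  lia.
Qed.
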